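(* For a ring $R$, the following are equivalent: (1) $R$ is uniquely clean; (2) $R$ is a DI ring in which every idempotent is central.
   Context: All rings are associative with identity; $U(R)$ is the group of units. $\Delta(R)=\{x\in R: x+u\in U(R)\text{ for all }u\in U(R)\}$. A ring $R$ is a DI ring if every $r\in R$ can be written $r=e+b$ with $e^2=e\in R$ and $b\in\Delta(R)$. A ring $R$ is uniquely clean if every element of $R$ can be written in exactly one way as $e+u$ with $e^2=e$ and $u\in U(R)$. *)

From HB Require Import structures.
From mathcomp Require Import all_boot all_algebra.
Set Implicit Arguments. Unset Strict Implicit. Unset Printing Implicit Defensive.
Import GRing.Theory.
Local Open Scope ring_scope.

Definition in_Delta (R : unitRingType) (x : R) : Prop :=
  forall u : R, u \is a GRing.unit -> x + u \is a GRing.unit.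

Definition idem (R : unitRingType) (e : R) : Prop := e * e = e.

Definition DI_ring (R : unitRingType) : Prop :=
  forall r : R, exists e b : R, idem e /\ in_Delta b /\ r = e + b.

Definition uniquely_clean (R : unitRingType) : Prop :=
  forall r : R,
    (exists e u : R, idem e /\ u \is a GRing.unit /\ r = e + u) /\
    (forall e1 u1 e2 u2 : R,
        idem e1 -> u1 \is a GRing.unit -> r = e1 + u1 ->
        idem e2 -> u2 \is a GRing.unit -> r = e2 + u2 ->
        e1 = e2 /\ u1 = u2).

Definition idempotents_central (R : unitRingType) : Prop :=
  forall e : R, idem e -> forall x : R, e * x = x * e.

(* A tripotent d (d^3 = d) in Delta(R) is 0: d + (1 - d^2) squares to 1, so
   d - (d + (1 - d^2)) = d^2 - 1 is a unit, the idempotent 1 - d^2 equals 1 and d = d d^2 = 0.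
   The difference of two commuting idempotents is a tripotent, and in a DI ring every unit
   lies in 1 + Delta(R); with central idempotents this makes clean decompositions unique.
   Conversely, in a uniquely clean ring the two decompositions e + (a - 1) = (e + a) + (-1),
   for a in eR(1 - e), force a = 0, so idempotents are central.  For units u, v, write
   1 + v^-1 (u - 1) = g + w cleanly; then u - g = (1 - g) u + g v w is a unit, so
   u = 0 + u = g + (u - g) gives g = 0 and (u - 1) + v = v w is a unit. *)
From mathcomp Require Import all_boot all_algebra.
Set Implicit Arguments. Unset Strict Implicit. Unset Printing Implicit Defensive.
Import GRing.Theory.
Local Open Scope ring_scope.

Section UnitRing.
Variable R : unitRingType.
Implicit Types a b d e u x : R.

Lemma idem_unit_eq1 e : idem e -> e \is a GRing.unit -> e = 1.
Proof. by move=> he eU; apply: (mulrI eU); rewrite mulr1 he. Qed.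

Lemma idem1B e : idem e -> idem (1 - e).
Proof. by move=> he; rewrite /idem mulrBl mul1r mulrBr mulr1 he subrr subr0. Qed.

Lemma in_DeltaN b : in_Delta b -> in_Delta (- b).
Proof. by move=> hb u uU; rewrite -(opprK u) -opprD unitrN hb ?unitrN. Qed.

Lemma in_DeltaD a b : in_Delta a -> in_Delta b -> in_Delta (a + b).
Proof. by move=> ha hb u uU; rewrite -addrA ha ?hb. Qed.

Lemma in_Delta_tripotent_eq0 d : in_Delta d -> d * d * d = d -> d = 0.
Proof.
move=> hd d3; set p := 1 - d * d.
have p_idem : idem p by apply: idem1B; rewrite /idem mulrA d3.
have dp : d * p = 0 by rewrite mulrBr mulr1 mulrA d3 subrr.
have pd : p * d = 0 by rewrite mulrBl mul1r d3 subrr.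
have w_sq : (d + p) * (d + p) = 1.
  by rewrite mulrDl (mulrDr d) (mulrDr p) dp pd p_idem addr0 add0r addrC subrK.
have wU : d + p \is a GRing.unit by apply/unitrP; exists (d + p).
have pU : p \is a GRing.unit.
  by have := hd (- (d + p)); rewrite unitrN opprD addNKr unitrN => /(_ wU).
have dd0 : d * d = 0.
  have := idem_unit_eq1 p_idem pU; rewrite /p => /eqP.
  by rewrite subr_eq addrC -subr_eq subrr eq_sym => /eqP.
by rewrite -d3 dd0 mul0r.
Qed.

Lemma commuting_idem_subr_tripotent e1 e2 :
  idem e1 -> idem e2 -> e1 * e2 = e2 * e1 ->
  (e1 - e2) * (e1 - e2) * (e1 - e2) = e1 - e2.
Proof.
move=> h1 h2 hc; set c := e1 * e2; set d := e1 - e2.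
have de1 : d * e1 = e1 - c by rewrite mulrBl h1 -hc.
have de2 : d * e2 = c - e2 by rewrite mulrBl h2.
have dc : d * c = 0 by rewrite mulrBl !mulrA h1 -hc -mulrA h2 hc subrr.
rewrite {3}/d mulrBr -!mulrA de1 de2 !mulrBr dc sub0r subr0 opprK.
by rewrite de1 de2 addrA subrK.
Qed.

Lemma commuting_idem_eq e1 e2 : idem e1 -> idem e2 -> e1 * e2 = e2 * e1 ->
  in_Delta (e1 - e2) -> e1 = e2.
Proof.
move=> h1 h2 hc hd; apply/eqP; rewrite -subr_eq0; apply/eqP.
exact: in_Delta_tripotent_eq0 hd (commuting_idem_subr_tripotent h1 h2 hc).
Qed.

Lemma DI_unit_subr1 u : DI_ring R -> u \is a GRing.unit -> in_Delta (u - 1).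
Proof.
move=> DI uU; have [f [b [hf [hb uE]]]] := DI u; subst u.
have fU : f \is a GRing.unit by have := in_DeltaN hb uU; rewrite addrC addrK.
by rewrite (idem_unit_eq1 hf fU) addrC addKr.
Qed.

Section CentralIdempotent.
Variable g : R.
Hypotheses (g_idem : idem g) (g_central : forall x, g * x = x * g).

Lemma mul_central_idem_sum a b a' b' :
  ((1 - g) * a + g * b) * ((1 - g) * a' + g * b') = (1 - g) * (a * a') + g * (b * b').
Proof.
have p_central x : (1 - g) * x = x * (1 - g).
  by rewrite mulrBl mulrBr mul1r mulr1 g_central.
have pg : (1 - g) * g = 0 by rewrite mulrBl mul1r g_idem subrr.
have gp : g * (1 - g) = 0 by rewrite mulrBr mulr1 g_idem subrr.
have swap c x y : (forall z, c * z = z * c) -> x * (c * y) = c * (x * y).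
  by move=> cC; rewrite mulrA -cC mulrA.
rewrite mulrDl (mulrDr ((1 - g) * a)) (mulrDr (g * b)) -!mulrA.
rewrite (swap (1 - g) a) // (swap g a) // (swap (1 - g) b) // (swap g b) //.
by rewrite !mulrA pg gp g_idem (idem1B g_idem) !mul0r addr0 add0r.
Qed.

Lemma unit_central_idem_sum a b : a \is a GRing.unit -> b \is a GRing.unit ->
  (1 - g) * a + g * b \is a GRing.unit.
Proof.
move=> aU bU; apply/unitrP; exists ((1 - g) * a^-1 + g * b^-1).
by rewrite !mul_central_idem_sum !mulVr ?mulrV // !mulr1 subrK.
Qed.
End CentralIdempotent.
End UnitRing.

Section UniquelyClean.
Variable R : unitRingType.
Hypothesis uc : uniquely_clean R.
Implicit Types a e g u : R.

Lemma uniquely_clean_idem_eq0 g u : idem g -> u \is a GRing.unit ->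
  u - g \is a GRing.unit -> g = 0.
Proof.
move=> hg uU ugU; have [_ /(_ 0 u g (u - g))] := uc u.
case=> //; first by rewrite /idem mulr0.
- by rewrite add0r.
- by rewrite addrC subrK.
Qed.

Lemma uniquely_clean_corner_eq0 e a : idem e -> e * a = a -> a * e = 0 -> a = 0.
Proof.
move=> he ea ae0.
have aa0 : a * a = 0 by rewrite -{2}ea mulrA ae0 mul0r.
have ea_idem : idem (e + a).
  by rewrite /idem mulrDl !mulrDr he ea ae0 aa0 !addr0.
have a1U : a - 1 \is a GRing.unit.
  rewrite -opprB unitrN; apply/unitrP; exists (1 + a).
  split; first by rewrite mulrDl mul1r mulrBr mulr1 aa0 subr0 subrK.
  by rewrite mulrDr mulr1 mulrBl mul1r aa0 subr0 subrK.
have [_ /(_ e (a - 1) (e + a) (-1) he a1U erefl ea_idem)] := uc (e + (a - 1)).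
case; rewrite ?addrA ?unitrN1 // => /eqP.
by rewrite -subr_eq0 opprD addrA subrr sub0r oppr_eq0 => /eqP.
Qed.

Lemma uniquely_clean_idem_central : idempotents_central R.
Proof.
have corner (f x : R) : idem f -> f * x * (1 - f) = 0.
  move=> hf; apply: (uniquely_clean_corner_eq0 hf); first by rewrite !mulrA hf.
  by rewrite -mulrA mulrBl mul1r hf subrr mulr0.
move=> e he x; have := corner _ x he; have := corner _ x (idem1B he).
rewrite subKr mulrBl mul1r mulrBl mulrBr mulr1.
by move=> /subr0_eq -> /subr0_eq.
Qed.

Lemma uniquely_clean_unit_subr1 u : u \is a GRing.unit -> in_Delta (u - 1).
Proof.
move=> uU v vU.
have [[g [w [hg [wU sE]]]] _] := uc (1 + v^-1 * (u - 1)).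
have gC := uniquely_clean_idem_central hg.
have g_u1 : g * (u - 1) = g * (v * w).
  have := congr1 (fun z => g * z) sE.
  rewrite /= (mulrDr g 1) (mulrDr g g) mulr1 hg => /addrI gvE.
  by rewrite -(mulVKr vU (u - 1)) mulrA gC -mulrA gvE mulrA -gC -mulrA.
have ugU : u - g \is a GRing.unit.
  have -> : u - g = (1 - g) * u + g * (v * w).
    by rewrite -g_u1 mulrBl mul1r mulrBr mulr1 addrA subrK.
  by apply: unit_central_idem_sum; rewrite ?unitrMr.
have -> : u - 1 + v = v * (1 + v^-1 * (u - 1)) by rewrite mulrDr mulr1 mulVKr // addrC.
by rewrite sE (uniquely_clean_idem_eq0 hg uU ugU) add0r unitrMr.
Qed.
End UniquelyClean.

Theorem corollary4p7 (R : unitRingType) :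
  uniquely_clean R <-> (DI_ring R /\ idempotents_central R).
Proof.
split=> [uc | [DI central] r].
  split; last exact: uniquely_clean_idem_central.
  move=> r; have [[e [u [he [uU rE]]]] _] := uc (r + 1).
  exists e, (u - 1); split=> //; split; first exact: uniquely_clean_unit_subr1.
  by rewrite addrA -rE addrK.
split.
  have [e [b [he [hb rE]]]] := DI (r - 1).
  exists e, (b + 1); split=> //; split; first exact: hb (unitr1 R).
  by rewrite addrA -rE subrK.
move=> e1 u1 e2 u2 h1 u1U rE1 h2 u2U rE2.
have e12 : e1 = e2.
  apply: commuting_idem_eq (central _ h1 _) _ => //.
  have -> : e1 - e2 = (u2 - 1) - (u1 - 1).
    rewrite opprB addrA subrK; apply/eqP.
    by rewrite subr_eq addrAC (addrC u2) -rE2 rE1 addrK.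
  exact: in_DeltaD (DI_unit_subr1 DI u2U) (in_DeltaN (DI_unit_subr1 DI u1U)).
by split=> //; apply: (addrI e1); rewrite -rE1 rE2 e12.
Qed.
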